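(* Let $G$ be a group such that $Q=\mathrm{Core}(G)$ is latin, and let $\theta:G\times G\to G$ be given by $\theta_{x,y}=xy^{-1}$ (a quandle cocycle of $Q$ with values in $G$). Then $\theta$ is cohomologous to the trivial cocycle if and only if $G$ is abelian.
   Context: $\mathrm{Core}(G)$ is the quandle on $G$ with $x*y=xy^{-1}x$; a quandle is latin if every right translation $y\mapsto y*x$ is bijective. A quandle cocycle of a quandle $Q$ with values in $G$ is $\theta:Q\times Q\to G$ with $\theta_{x*y,x*z}\theta_{x,z}=\theta_{x,y*z}\theta_{y,z}$ and $\theta_{x,x}=1$; $\theta$ is cohomologous to the trivial cocycle (constantly $1$) if there exists $\gamma:Q\to G$ with $\theta_{x,y}=\gamma_{x*y}\gamma_y^{-1}$ for all $x,y\in Q$. *)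

From Stdlib Require Import Program.Basics.

Record Group := {
  carrier :> Type;
  gmul : carrier -> carrier -> carrier;
  ginv : carrier -> carrier;
  gone : carrier;
  gmul_assoc : forall x y z, gmul x (gmul y z) = gmul (gmul x y) z;
  gmul_1l : forall x, gmul gone x = x;
  gmul_Vl : forall x, gmul (ginv x) x = gone
}.

Arguments gmul {g}.
Arguments ginv {g}.
Arguments gone {g}.

Definition bijective {A B : Type} (f : A -> B) : Prop :=
  exists g : B -> A, (forall a, g (f a) = a) /\ (forall b, f (g b) = b).

Definition core_op {G : Group} (x y : G) : G := gmul (gmul x (ginv y)) x.

Definition core_latin (G : Group) : Prop :=
  forall x : G, bijective (fun y : G => core_op y x).

Definition theta {G : Group} (x y : G) : G := gmul x (ginv y).

Definition cohomologous_to_trivial {G : Group} (c : G -> G -> G) : Prop :=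
  exists gamma : G -> G,
    forall x y : G, c x y = gmul (gamma (core_op x y)) (ginv (gamma y)).

Definition abelian (G : Group) : Prop := forall x y : G, gmul x y = gmul y x.

(** If [Core G] is latin, squaring [y |-> y y = y * 1] is a bijection of [G].
    Evaluating a coboundary [gamma] of [theta] at [y = 1] forces
    [gamma (w w) = w gamma(1)]; evaluating it at [y = z z] then shows that the
    square root of [x z^-2 x] is [x z^-1], so [z^-1 x = x z^-1].
    Conversely, in an abelian group the square root map is itself a coboundary
    of [theta], because [x (sqrt y)^-1] squares to [x y^-1 x]. *)

From Stdlib Require Import Setoid.

Section GroupLemmas.
Variable G : Group.
Local Infix "*" := (@gmul G).

Lemma mulgV (x : G) : x * ginv x = gone.
Proof.
  rewrite <- (gmul_1l G (x * ginv x)), <- (gmul_Vl G (ginv x)) at 1.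
  rewrite <- gmul_assoc, (gmul_assoc _ (ginv x) x), gmul_Vl, gmul_1l.
  apply gmul_Vl.
Qed.

Lemma mulg1 (x : G) : x * gone = x.
Proof. rewrite <- (gmul_Vl G x), gmul_assoc, mulgV. apply gmul_1l. Qed.

Lemma mulKg (x y : G) : ginv x * (x * y) = y.
Proof. rewrite gmul_assoc, gmul_Vl. apply gmul_1l. Qed.

Lemma mulKVg (x y : G) : x * (ginv x * y) = y.
Proof. rewrite gmul_assoc, mulgV. apply gmul_1l. Qed.

Lemma mulgI (x y z : G) : x * y = x * z -> y = z.
Proof. intro E. rewrite <- (mulKg x y), E. apply mulKg. Qed.

Lemma invgK (x : G) : ginv (ginv x) = x.
Proof. apply (mulgI (ginv x)). rewrite mulgV. symmetry. apply gmul_Vl. Qed.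

Lemma invg1 : ginv (@gone G) = gone.
Proof. rewrite <- (mulg1 (ginv gone)). apply gmul_Vl. Qed.

Lemma invMg (x y : G) : ginv (x * y) = ginv y * ginv x.
Proof.
  apply (mulgI (x * y)).
  rewrite mulgV, <- gmul_assoc, mulKVg, mulgV. reflexivity.
Qed.

End GroupLemmas.

Arguments mulgV {G}. Arguments mulg1 {G}. Arguments mulKg {G}.
Arguments mulKVg {G}. Arguments mulgI {G}. Arguments invgK {G}.
Arguments invg1 {G}. Arguments invMg {G}.

Ltac gsimpl :=
  repeat rewrite ?invMg, ?invgK, ?invg1, ?gmul_1l, ?mulg1, ?mulgV, ?gmul_Vl,
    ?mulKg, ?mulKVg, <- ?gmul_assoc.

Lemma core_op_1r (G : Group) (y : G) : core_op y gone = gmul y y.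
Proof. unfold core_op. rewrite invg1, mulg1. reflexivity. Qed.

Lemma core_latin_square_bijective (G : Group) :
  core_latin G -> bijective (fun y : G => gmul y y).
Proof.
  intro HQ. destruct (HQ gone) as [s [sK Ks]].
  exists s. split; intro y; rewrite <- core_op_1r; [apply sK | apply Ks].
Qed.

Lemma commute_inverses_abelian (G : Group) :
  (forall x z : G, gmul (ginv z) x = gmul x (ginv z)) -> abelian G.
Proof. intros Hcomm x y. rewrite <- (invgK x). apply Hcomm. Qed.

Lemma theta_coboundary_abelian (G : Group) :
  (forall w : G, exists v, gmul v v = w) ->
  cohomologous_to_trivial (@theta G) -> abelian G.
Proof.
  intros square_onto [gamma Hgamma].
  set (c := gamma gone).
  assert (gamma_square : forall w, gamma (gmul w w) = gmul w c).
  { intro w. specialize (Hgamma w gone).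
    unfold theta in Hgamma. rewrite core_op_1r, invg1, mulg1 in Hgamma.
    rewrite Hgamma at 3. fold c. gsimpl. reflexivity. }
  apply commute_inverses_abelian. intros x z.
  destruct (square_onto (core_op x (gmul z z))) as [v Hv].
  specialize (Hgamma x (gmul z z)).
  unfold theta in Hgamma. rewrite <- Hv, !gamma_square in Hgamma.
  assert (v_root : v = gmul x (ginv z)).
  { apply (mulgI (ginv x)). apply (f_equal (fun w => gmul w z)) in Hgamma.
    revert Hgamma. gsimpl. intro Hgamma. rewrite <- Hgamma. gsimpl. reflexivity. }
  rewrite v_root in Hv. unfold core_op in Hv. revert Hv. gsimpl. intro Hv.
  do 2 apply mulgI in Hv. symmetry. exact Hv.
Qed.

Lemma abelian_theta_coboundary (G : Group) :
  abelian G -> bijective (fun y : G => gmul y y) ->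
  cohomologous_to_trivial (@theta G).
Proof.
  intros Hab [s [sK Ks]].
  exists s. intros x y. unfold theta, core_op.
  set (u := s y).
  assert (Hy : y = gmul u u) by (symmetry; apply Ks).
  assert (Es : s (gmul (gmul x (ginv y)) x) = gmul x (ginv u)).
  { rewrite <- (sK (gmul x (ginv u))). f_equal.
    rewrite Hy. gsimpl. rewrite (Hab (ginv u) x). gsimpl. reflexivity. }
  rewrite Es, Hy. gsimpl. reflexivity.
Qed.

Theorem proposition4p5 (G : Group) (HQ : core_latin G) :
  cohomologous_to_trivial (@theta G) <-> abelian G.
Proof.
  destruct (core_latin_square_bijective G HQ) as [s Hs].
  split.
  - apply theta_coboundary_abelian.
    intro w. exists (s w). apply (proj2 Hs).
  - intro Hab. apply abelian_theta_coboundary; [exact Hab | exists s; exact Hs].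
Qed.
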